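(* Let $R$ be a ring, $M$ a nonzero left $R$-module, $\Omega$ an infinite set, $N$ either $\bigoplus_{i\in\Omega} M$ or $\prod_{i\in\Omega} M$, and $E=\mathrm{End}_R(N)$. Let $(U_i)_{i\in I}$ be a family of subsets of $E$ with $\bigcup_{i\in I}U_i=E$ and $|I|\le|\Omega|$. Then there exist $i\in I$ and a moiety $\Sigma\subseteq\Omega$ such that $\Sigma$ is full with respect to $U_i$.
   Context: Rings are unital and associative; endomorphisms are written on the right of their arguments. For $\Sigma\subseteq\Omega$, $M^{\Sigma}$ denotes the $R$-submodule of $N$ consisting of elements supported on the coordinates in $\Sigma$ (so $N = M^{\Sigma}\oplus M^{\Omega\setminus\Sigma}$). For $U\subseteq E$, let $U_{\{\Sigma\}}=\{f\in U : M^{\Sigma}f\subseteq M^{\Sigma},\ M^{\Omega\setminus\Sigma}f\subseteq M^{\Omega\setminus\Sigma}\}$. A subset $\Sigma\subseteq\Omega$ is called full with respect to $U\subseteq E$ if every $R$-endomorphism of $M^{\Sigma}$ is the restriction to $M^{\Sigma}$ of some member of $U_{\{\Sigma\}}$. A subset $\Sigma\subseteq\Omega$ is a moiety if $|\Sigma|=|\Omega|=|\Omega\setminus\Sigma|$. *)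

From HB Require Import structures.
From mathcomp Require Import all_boot all_order all_algebra.
From mathcomp Require Import boolp classical_sets cardinality.
Set Implicit Arguments. Unset Strict Implicit. Unset Printing Implicit Defensive.
Import GRing.Theory.
Local Open Scope ring_scope.
Local Open Scope classical_set_scope.

(* Elements of N are represented as functions Omega -> M.
   prodN = true  : N = prod_{i in Omega} M  (all functions)
   prodN = false : N = (+)_{i in Omega} M   (finitely supported functions) *)
Definition inN (R : pzRingType) (M : lmodType R) (Omega : Type) (prodN : bool)
  (x : Omega -> M) : Prop :=
  if prodN then True else finite_set [set w | x w != 0].

Definition fadd (R : pzRingType) (M : lmodType R) (Omega : Type)
  (x y : Omega -> M) : Omega -> M := fun w => x w + y w.
Definition fscale (R : pzRingType) (M : lmodType R) (Omega : Type)
  (a : R) (x : Omega -> M) : Omega -> M := fun w => a *: x w.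

Definition MSub (R : pzRingType) (M : lmodType R) (Omega : Type) (prodN : bool)
  (Sigma : set Omega) : set (Omega -> M) :=
  [set x | inN prodN x /\ forall w, ~ Sigma w -> x w = 0].

Definition is_endo_on (R : pzRingType) (M : lmodType R) (Omega : Type)
  (A : set (Omega -> M)) (f : (Omega -> M) -> (Omega -> M)) : Prop :=
  [/\ (forall x, A x -> A (f x)),
      (forall x y, A x -> A y -> f (fadd x y) = fadd (f x) (f y)) &
      (forall a x, A x -> f (fscale a x) = fscale a (f x))].

(* An element of E is represented by a function on Omega -> M
   that is R-linear on N, maps N into N, and is 0 off N (this canonical
   normalisation makes the representation of End_R(N) bijective). *)
Definition EndN (R : pzRingType) (M : lmodType R) (Omega : Type) (prodN : bool)
  : set ((Omega -> M) -> (Omega -> M)) :=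
  [set f | is_endo_on (inN prodN) f /\ forall x, ~ inN prodN x -> f x = (fun _ => 0)].

Definition stab (R : pzRingType) (M : lmodType R) (Omega : Type) (prodN : bool)
  (U : set ((Omega -> M) -> (Omega -> M))) (Sigma : set Omega) :=
  [set f | U f /\ (forall x, MSub prodN Sigma x -> MSub prodN Sigma (f x))
                /\ (forall x, MSub prodN (~` Sigma) x -> MSub prodN (~` Sigma) (f x))].

Definition full (R : pzRingType) (M : lmodType R) (Omega : Type) (prodN : bool)
  (U : set ((Omega -> M) -> (Omega -> M))) (Sigma : set Omega) : Prop :=
  forall g, is_endo_on (MSub prodN Sigma) g ->
    exists2 f, stab prodN U Sigma f & forall x, MSub prodN Sigma x -> f x = g x.

Definition moiety (Omega : Type) (Sigma : set Omega) : Prop :=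
  (Sigma #= [set: Omega])%card /\ ((~` Sigma) #= [set: Omega])%card.

From HB Require Import structures.
From mathcomp Require Import all_boot all_order all_algebra.
From mathcomp Require Import boolp classical_sets cardinality functions.

(* Since |I| <= |Omega| = |Omega * Omega|, Omega carries a family (S_i)_(i in I)
   of pairwise disjoint moieties.  If no S_i were full for U_i, pick for each i
   an endomorphism g_i of M^(S_i) that is not the restriction of any member of
   (U_i)_{S_i}.  Gluing the g_i gives an endomorphism F of N that stabilises
   every M^(S_i) and M^(Omega \ S_i) and restricts to g_i on M^(S_i).  As the
   U_i cover E, F lies in some U_i, so F restricts to g_i from within
   (U_i)_{S_i}: a contradiction.  The equality |Omega * Omega| = |Omega| is
   Hessenberg's theorem, proved below with Zorn's lemma on graphs of injections
   A * A -> A. *)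

Set Implicit Arguments.
Unset Strict Implicit.
Unset Printing Implicit Defensive.
Import GRing.Theory.

Local Open Scope classical_set_scope.

Lemma card_leTT_inj T U (u0 : U) :
  ([set: T] #<= [set: U])%card -> exists f : T -> U, injective f.
Proof.
elim/Ppointed: U u0 => U u0; first by case: (no u0).
by move=> /pcard_injP[f f_inj]; exists f => x y; apply: f_inj; rewrite inE.
Qed.

Lemma injective_on_linv T U (A : set T) (k : T -> U) (t0 : T) :
  {in A &, injective k} -> exists kinv : U -> T, forall x, A x -> kinv (k x) = x.
Proof.
move=> k_inj.
have /choice[kinv kinvP] : forall z, exists x, (exists2 x', A x' & k x' = z) -> A x /\ k x = z.
  move=> z; have [[x Ax kx]|Nz] := pselect (exists2 x, A x & k x = z); last by exists t0.
  by exists x.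
exists kinv => x Ax; have [Ax' e] := kinvP (k x) (ex_intro2 _ _ x Ax erefl).
by apply: k_inj; rewrite ?inE.
Qed.

Lemma chain_bigcup2 T (F : set (set T)) p q : total_on F subset ->
  (\bigcup_(G in F) G) p -> (\bigcup_(G in F) G) q -> exists2 G, F G & G p /\ G q.
Proof.
move=> Ftot [G FG Gp] [H FH Hq].
have [GH|HG] := Ftot _ _ FG FH; first by exists H => //; split=> //; apply: GH.
by exists G => //; split=> //; apply: HG.
Qed.

Definition functional_graph X Y (G : set (X * Y)) :=
  forall p q, G p -> G q -> p.1 = q.1 -> p.2 = q.2.

Definition injective_graph X Y (G : set (X * Y)) :=
  forall p q, G p -> G q -> p.2 = q.2 -> p.1 = q.1.

Lemma functional_graph_bigcup X Y (F : set (set (X * Y))) : total_on F subset ->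
  (forall G, F G -> functional_graph G) -> functional_graph (\bigcup_(G in F) G).
Proof.
by move=> Ftot FG p q Fp Fq; have [G /FG + [Gp Gq]] := chain_bigcup2 Ftot Fp Fq; apply.
Qed.

Lemma injective_graph_bigcup X Y (F : set (set (X * Y))) : total_on F subset ->
  (forall G, F G -> injective_graph G) -> injective_graph (\bigcup_(G in F) G).
Proof.
by move=> Ftot FG p q Fp Fq; have [G /FG + [Gp Gq]] := chain_bigcup2 Ftot Fp Fq; apply.
Qed.

Definition partial_injection X Y (A : set X) (B : set Y) (G : set (X * Y)) :=
  [/\ G `<=` A `*` B, functional_graph G & injective_graph G].

Lemma partial_injection_bigcup X Y (A : set X) (B : set Y) (F : set (set (X * Y))) :
  total_on F subset -> (forall G, F G -> partial_injection A B G) ->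
  partial_injection A B (\bigcup_(G in F) G).
Proof.
move=> Ftot FP; split.
- by move=> p [G /FP[+ _ _]]; apply.
- by apply: functional_graph_bigcup => // G /FP[].
- by apply: injective_graph_bigcup => // G /FP[].
Qed.

Lemma partial_injection_setU1 X Y (A : set X) (B : set Y) (G : set (X * Y)) a b :
  partial_injection A B G -> A a -> B b ->
  ~ (exists y, G (a, y)) -> ~ (exists x, G (x, b)) ->
  partial_injection A B (G `|` [set (a, b)]).
Proof.
move=> [GAB Gfun Ginj] Aa Bb Na Nb; split.
- by move=> p [/GAB//|->].
- move=> [x y] [x' y'] [Gp|[-> ->]] [Gq|[-> ->]] //= exx'.
  + exact: (Gfun (x, y) (x', y')).
  + by case: Na; exists y; rewrite -exx'.
  + by case: Na; exists y'; rewrite exx'.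
- move=> [x y] [x' y'] [Gp|[-> ->]] [Gq|[-> ->]] //= eyy'.
  + exact: (Ginj (x, y) (x', y')).
  + by case: Nb; exists x; rewrite -eyy'.
  + by case: Nb; exists x'; rewrite eyy'.
Qed.

Lemma inj_comparable X Y (A : set X) (B : set Y) (x0 : X) (y0 : Y) :
  (exists f : X -> Y, f @` A `<=` B /\ {in A &, injective f}) \/
  (exists g : Y -> X, g @` B `<=` A /\ {in B &, injective g}).
Proof.
have [G [[GAB Gfun Ginj] Gmax]] : exists G,
    partial_injection A B G /\ forall G', G `<` G' -> ~ partial_injection A B G'.
  by apply: Zorn_bigcup => F FP Ftot; apply: partial_injection_bigcup.
have [[a Aa Na]|Adom] := pselect (exists2 x, A x & ~ exists y, G (x, y)); last first.
  left; have /choice[f Gf] : forall x, exists y, A x -> G (x, y).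
    move=> x; have [Ax|NAx] := pselect (A x); last by exists y0 => /NAx.
    by apply: contrapT => Nx; apply: Adom; exists x => // -[y Gxy]; apply: Nx; exists y.
  exists f; split; first by move=> _ [x Ax <-]; exact: (GAB _ (Gf _ Ax)).2.
  move=> x x'; rewrite !inE => Ax Ax' e.
  exact: (Ginj (x, f x) (x', f x') (Gf _ Ax) (Gf _ Ax') e).
have [[b Bb Nb]|Bdom] := pselect (exists2 y, B y & ~ exists x, G (x, y)); last first.
  right; have /choice[g Gg] : forall y, exists x, B y -> G (x, y).
    move=> y; have [By|NBy] := pselect (B y); last by exists x0 => /NBy.
    by apply: contrapT => Ny; apply: Bdom; exists y => // -[x Gxy]; apply: Ny; exists x.
  exists g; split; first by move=> _ [y By <-]; exact: (GAB _ (Gg _ By)).1.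
  move=> y y'; rewrite !inE => By By' e.
  exact: (Gfun (g y, y) (g y', y') (Gg _ By) (Gg _ By') e).
exfalso; apply: (Gmax (G `|` [set (a, b)])); last exact: partial_injection_setU1.
by split=> [p Gp|/(_ (a, b)) GabG]; [left|apply: Na; exists b; apply: GabG; right].
Qed.

Definition pairing_on T (A : set T) (f : T * T -> T) :=
  (forall x y, A x -> A y -> A (f (x, y))) /\
  (forall x y x' y', A x -> A y -> A x' -> A y' ->
     f (x, y) = f (x', y') -> x = x' /\ y = y').

Definition graph_on T (A : set T) (f : T * T -> T) : set ((T * T) * T) :=
  [set (p, f p) | p in A `*` A].

Definition graph_support T (G : set ((T * T) * T)) : set T :=
  [set x | exists2 q, G q & [\/ q.1.1 = x, q.1.2 = x | q.2 = x]].

Definition pairing_graph T (G : set ((T * T) * T)) :=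
  [/\ functional_graph G, injective_graph G &
      forall x y, graph_support G x -> graph_support G y -> exists a, G ((x, y), a)].

Lemma graph_supportS T (G H : set ((T * T) * T)) :
  G `<=` H -> graph_support G `<=` graph_support H.
Proof. by move=> GH x [q Gq qx]; exists q => //; apply: GH. Qed.

Lemma graph_on_support T (A : set T) (f : T * T -> T) :
  pairing_on A f -> graph_support (graph_on A f) = A.
Proof.
move=> [fA _]; apply/seteqP; split=> [x [_ [[y z] [Ay Az] <-]]|x Ax].
  by case=> /= <- //; apply: fA.
by exists ((x, x), f (x, x)) => /=; [exists (x, x)|constructor].
Qed.

Lemma pairing_graph_on T (A : set T) (f : T * T -> T) :
  pairing_on A f -> pairing_graph (graph_on A f).
Proof.
move=> fP; have [_ f_inj] := fP; split.
- by move=> _ _ [p _ <-] [q _ <-] /= ->.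
- move=> _ _ [[x y] /= [Ax Ay] <-] [[x' y'] /= [Ax' Ay'] <-] /= e.
  by have [-> ->] := f_inj _ _ _ _ Ax Ay Ax' Ay' e.
- rewrite graph_on_support // => x y Ax Ay.
  by exists (f (x, y)); exists (x, y).
Qed.

Lemma pairing_graph_bigcup T (F : set (set ((T * T) * T))) : total_on F subset ->
  (forall G, F G -> pairing_graph G) -> pairing_graph (\bigcup_(G in F) G).
Proof.
move=> Ftot FP; split.
- by apply: functional_graph_bigcup => // G /FP[].
- by apply: injective_graph_bigcup => // G /FP[].
move=> x y [q Fq qx] [r Fr ry].
have [G FG [Gq Gr]] := chain_bigcup2 Ftot Fq Fr.
have [_ _ /(_ x y) [||a Ga]] := FP _ FG; [by exists q|by exists r|].
by exists a; exists G.
Qed.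

Lemma pairing_graphP T (G : set ((T * T) * T)) : pairing_graph G ->
  exists2 f, pairing_on (graph_support G) f & G `<=` graph_on (graph_support G) f.
Proof.
move=> [Gfun Ginj Gtot].
have /choice[f Gf] : forall p, exists a,
    graph_support G p.1 -> graph_support G p.2 -> G (p, a).
  move=> [x y]; have [[a Ga]|NG] := pselect (exists a, G ((x, y), a)).
    by exists a.
  by exists x => /= Sx Sy; case: NG; apply: Gtot.
have GS p a : G (p, a) -> [/\ graph_support G p.1, graph_support G p.2 & graph_support G a].
  by move=> Gpa; split; exists (p, a) => //; constructor.
exists f; first split.
- move=> x y Sx Sy; have := Gf (x, y) Sx Sy.
  by move=> /GS[].
- move=> x y x' y' Sx Sy Sx' Sy' e.
  have := Ginj _ _ (Gf (x, y) Sx Sy) (Gf (x', y') Sx' Sy') e.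
  by case.
move=> [p a] Gpa; have [Sp1 Sp2 _] := GS _ _ Gpa.
exists p; first by case: p {Gpa} Sp1 Sp2.
by have /= -> := Gfun (p, f p) (p, a) (Gf _ Sp1 Sp2) Gpa erefl.
Qed.

Lemma graph_on_proper T (A B : set T) (f g : T * T -> T) :
  A `<` B -> (forall x y, A x -> A y -> g (x, y) = f (x, y)) ->
  graph_on A f `<` graph_on B g.
Proof.
move=> [AB NBA] gf; split.
  move=> _ [[x y] [Ax Ay] <-]; rewrite -gf //.
  by exists (x, y) => //; split; apply: AB.
have [b Bb NAb] : exists2 b, B b & ~ A b.
  by apply: contrapT => Nb; apply: NBA => b Bb; apply: contrapT => NAb; apply: Nb; exists b.
move=> /(_ ((b, b), g (b, b))) /= [|[x y] [Ax _] [e _]]; first by exists (b, b).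
by move=> _; apply: NAb; rewrite -e.
Qed.

Section pairing_on_extension.
Variables (T : Type) (A : set T) (f : T * T -> T).
Hypothesis f_pairing : pairing_on A f.
Variables (a0 a1 a2 : T).
Hypotheses (Aa0 : A a0) (Aa1 : A a1) (Aa2 : A a2).
Hypotheses (a01 : a0 <> a1) (a02 : a0 <> a2) (a12 : a1 <> a2).

Let fA x y : A x -> A y -> A (f (x, y)). Proof. exact: f_pairing.1. Qed.
Let f_inj x y x' y' : A x -> A y -> A x' -> A y' ->
  f (x, y) = f (x', y') -> x = x' /\ y = y'.
Proof. exact: f_pairing.2. Qed.

Lemma pairing_on_total (g : T -> T) :
  g @` (~` A) `<=` A -> {in ~` A &, injective g} ->
  exists e : T * T -> T, injective e.
Proof.
move=> gA g_inj; pose h z := if `[< A z >] then f (z, a0) else f (g z, a1).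
have gA' z : ~ A z -> A (g z) by move=> NAz; apply: gA; exists z.
have hA z : A (h z).
  by rewrite /h; case: asboolP => Az; apply: fA => //; apply: gA'.
have h_inj : injective h.
  move=> z z'; rewrite /h; case: asboolP => Az; case: asboolP => Az' e.
  - by have [] := f_inj Az Aa0 Az' Aa0 e.
  - by have [_ /a01] := f_inj Az Aa0 (gA' _ Az') Aa1 e.
  - by have [_ /esym/a01] := f_inj (gA' _ Az) Aa1 Az' Aa0 e.
  - have [e' _] := f_inj (gA' _ Az) Aa1 (gA' _ Az') Aa1 e.
    by apply: g_inj; rewrite ?inE.
exists (fun p => f (h p.1, h p.2)) => -[z w] [z' w'] /= e.
by have [/h_inj -> /h_inj ->] := f_inj (hA z) (hA w) (hA z') (hA w') e.
Qed.

Variables (k kinv : T -> T).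
Hypotheses (kA : k @` A `<=` ~` A) (kK : forall x, A x -> kinv (k x) = x).

Let k_inj x x' : A x -> A x' -> k x = k x' -> x = x'.
Proof. by move=> Ax Ax' e; rewrite -(kK Ax) e kK. Qed.

Let B := A `|` k @` A.
Let kap z := if `[< A z >] then z else kinv z.
Let tag (bx by_ : bool) := if bx then a0 else if by_ then a1 else a2.
(* A pair of B * B outside A * A is coded in k @` A through the A-copies
   kap x, kap y of its coordinates, tagged by which coordinates lie in A. *)
Let l x y := k (f (tag `[< A x >] `[< A y >], f (kap x, kap y))).

Let kapA z : B z -> A (kap z).
Proof. by rewrite /kap; case: asboolP => // NAz [//|[x Ax <-]]; rewrite kK. Qed.

Let kap_inj z z' : B z -> B z' ->
  `[< A z >] = `[< A z' >] -> kap z = kap z' -> z = z'.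
Proof.
rewrite /kap => Bz Bz'; case: asboolP => Az; case: asboolP => Az' // _.
case: Bz => [//|[x Ax <-]]; case: Bz' => [//|[x' Ax' <-]].
by rewrite !kK // => ->.
Qed.

Let tag_inj bx by_ bx' by' : ~~ (bx && by_) -> ~~ (bx' && by') ->
  tag bx by_ = tag bx' by' -> bx = bx' /\ by_ = by'.
Proof. by case: bx; case: by_; case: bx'; case: by' => //= _ _ e; congruence. Qed.

Let tagA bx by_ : A (tag bx by_).
Proof. by rewrite /tag; case: bx; case: by_. Qed.

Let lA x y : B x -> B y -> (k @` A) (l x y).
Proof.
by move=> Bx By; exists (f (tag `[< A x >] `[< A y >], f (kap x, kap y))) => //;
  apply: fA => //; apply: fA; apply: kapA.
Qed.

Let l_inj x y x' y' : B x -> B y -> B x' -> B y' ->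
  ~ (A x /\ A y) -> ~ (A x' /\ A y') -> l x y = l x' y' -> x = x' /\ y = y'.
Proof.
move=> Bx By Bx' By' Nxy Nxy' e.
have fkapA z w : B z -> B w -> A (f (kap z, kap w)).
  by move=> Bz Bw; apply: fA; apply: kapA.
have tagN z w : ~ (A z /\ A w) -> ~~ (`[< A z >] && `[< A w >]).
  by move=> Nzw; apply/negP => /andP[/asboolP Az /asboolP Aw]; apply: Nzw.
have [etag ekap] := f_inj (tagA _ _) (fkapA _ _ Bx By) (tagA _ _) (fkapA _ _ Bx' By')
  (k_inj (fA (tagA _ _) (fkapA _ _ Bx By)) (fA (tagA _ _) (fkapA _ _ Bx' By')) e).
have [ex ey] := tag_inj (tagN _ _ Nxy) (tagN _ _ Nxy') etag.
have [kx ky] := f_inj (kapA Bx) (kapA By) (kapA Bx') (kapA By') ekap.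
by split; apply: kap_inj.
Qed.

Lemma pairing_on_extend : exists B' f',
  [/\ A `<` B', pairing_on B' f' & forall x y, A x -> A y -> f' (x, y) = f (x, y)].
Proof.
pose f' p := if `[< A p.1 >] && `[< A p.2 >] then f p else l p.1 p.2.
have f'E x y : A x -> A y -> f' (x, y) = f (x, y).
  by move=> Ax Ay; rewrite /f' !asboolT.
have f'N x y : ~ (A x /\ A y) -> f' (x, y) = l x y.
  by rewrite /f'; case: asboolP => Ax; case: asboolP => Ay //= [].
have lNA x y : B x -> B y -> ~ A (l x y) by move=> Bx By; apply/kA/lA.
exists B, f'; split => //; first split.
- by move=> x; left.
- by move=> /(_ (k a0) (or_intror (ex_intro2 _ _ a0 Aa0 erefl))); apply: kA; exists a0.
split.
- move=> x y Bx By; have [[Ax Ay]|Nxy] := pselect (A x /\ A y).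
    by left; rewrite f'E //; apply: fA.
  by right; rewrite f'N //; apply: lA.
move=> x y x' y' Bx By Bx' By'.
have [[Ax Ay]|Nxy] := pselect (A x /\ A y);
  have [[Ax' Ay']|Nxy'] := pselect (A x' /\ A y').
- by rewrite !f'E //; apply: f_inj.
- by rewrite (f'E x y) // (f'N x' y') // => e; case: (lNA _ _ Bx' By'); rewrite -e; apply: fA.
- by rewrite (f'N x y) // (f'E x' y') // => e; case: (lNA _ _ Bx By); rewrite e; apply: fA.
- by rewrite !f'N //; apply: l_inj.
Qed.

End pairing_on_extension.

Lemma pairing_graph_maximal T (G0 : set ((T * T) * T)) :
  pairing_graph G0 -> G0 !=set0 ->
  exists G, [/\ pairing_graph G, G0 `<=` G & forall G', G `<` G' -> ~ pairing_graph G'].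
Proof.
move=> G0_pairing [q0 G0q0].
(* The disjunct G = set0 accommodates the union of the empty chain. *)
pose P G := pairing_graph G /\ (G = set0 \/ G0 `<=` G).
have [G [[G_pairing G0G] Gmax]] : exists G, P G /\ forall G', G `<` G' -> ~ P G'.
  apply: Zorn_bigcup => F FP Ftot; split.
    by apply: pairing_graph_bigcup => // G /FP[].
  have [[H FH G0H]|NG0] := pselect (exists2 H, F H & G0 `<=` H).
    by right; apply: subset_trans G0H _; apply: bigcup_sup.
  left; apply/seteqP; split=> // q [H FH Hq]; have [_ [H0|G0H]] := FP _ FH.
    by rewrite H0 in Hq.
  by case: NG0; exists H.
have {}G0G : G0 `<=` G.
  case: G0G => // G_empty; exfalso; apply: (Gmax G0); last by split=> //; right.
  by rewrite G_empty; split=> // /(_ q0 G0q0).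
exists G; split=> // G' GG' G'_pairing; apply: (Gmax _ GG'); split=> //.
by right; apply: subset_trans G0G (properW GG').
Qed.

Lemma pairing_on_range_nat T (u : nat -> T) : injective u ->
  exists f0, pairing_on (range u) f0.
Proof.
move=> u_inj; have [pr pr_inj] := card_leTT_inj 0%N (proj1 (card_eqPle _ _) card_nat2).1.
have [uinv uK] := injective_on_linv 0%N (in2W u_inj : {in [set: nat] &, injective u}).
exists (fun p => u (pr (uinv p.1, uinv p.2))).
split=> [_ _ [n _ <-] [m _ <-]|_ _ _ _ [n _ <-] [m _ <-] [n' _ <-] [m' _ <-]].
  by exists (pr (n, m)) => //; rewrite /= !uK.
by rewrite /= !uK // => /u_inj/pr_inj[-> ->].
Qed.

Lemma infinite_pairing T : infinite_set [set: T] ->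
  exists e : T * T -> T, injective e.
Proof.
move=> Tinf; have [t0 _] := infinite_setN0 Tinf.
have [u u_inj] := card_leTT_inj t0 (proj1 (infiniteP _) Tinf).
have [f0 f0_pairing] := pairing_on_range_nat u_inj.
have G0N : graph_on (range u) f0 !=set0.
  by exists ((u 0, u 0), f0 (u 0, u 0))%N; exists (u 0, u 0)%N => //; split; exists 0%N.
have [G [G_pairing G0G Gmax]] := pairing_graph_maximal (pairing_graph_on f0_pairing) G0N.
have [f f_pairing Gf] := pairing_graphP G_pairing.
set A := graph_support G in f_pairing Gf.
have uA n : A (u n).
  by apply: (graph_supportS G0G); rewrite graph_on_support //; exists n.
have u01 : u 0%N <> u 1%N by move/u_inj.
have u02 : u 0%N <> u 2%N by move/u_inj.
have u12 : u 1%N <> u 2%N by move/u_inj.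
have [[k [kA k_inj]]|[g [gA g_inj]]] := inj_comparable A (~` A) t0 t0; last first.
  by apply: (pairing_on_total f_pairing (uA 0%N) (uA 1%N) u01 gA g_inj).
have [kinv kK] := injective_on_linv t0 k_inj.
have [B [f' [AB f'_pairing f'f]]] :=
  pairing_on_extend f_pairing (uA 0%N) (uA 1%N) (uA 2%N) u01 u02 u12 kA kK.
have [Gf' NGf'] := graph_on_proper AB f'f.
exfalso; apply: (Gmax (graph_on B f')); last exact: pairing_graph_on.
split; first exact: subset_trans Gf Gf'.
by move=> /subset_trans/(_ Gf).
Qed.

Lemma moiety_family (Omega I : Type) : infinite_set [set: Omega] ->
  ([set: I] #<= [set: Omega])%card ->
  exists2 S : I -> set Omega, (forall i, moiety (S i)) & trivIset setT S.
Proof.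
move=> Oinf IO; have [t0 _] := infinite_setN0 Oinf.
have [e e_inj] := infinite_pairing Oinf.
have [j j_inj] := card_leTT_inj t0 IO.
have row_card w : ((fun y => e (w, y)) @` setT #= [set: Omega])%card.
  by apply: inj_card_eq => y y' _ _ /e_inj[].
exists (fun i => (fun y => e (j i, y)) @` setT) => [i|]; last first.
  by move=> i i' _ _ [_ [[y _ <-] [y' _ /esym/e_inj[/j_inj]]]].
have [w wj] : exists w, w <> j i.
  apply: contrapT => Nw; apply: Oinf.
  rewrite (_ : [set: Omega] = [set j i]) ?finite_set1 //.
  by apply/seteqP; split=> // w _; apply: contrapT => wj; apply: Nw; exists w.
split; first exact: row_card.
apply/card_eqPle; split; first exact: card_leT.
move: (row_card w) => /card_eqPle [_ /card_le_trans]; apply.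
by apply: subset_card_le => _ [y _ <-] [y' _ /e_inj[/esym]].
Qed.

Local Open Scope ring_scope.

Section coordinate_submodules.
Variables (R : pzRingType) (M : lmodType R) (Omega : Type) (prodN : bool).
Implicit Types (S : set Omega) (x y : Omega -> M).

Local Notation inN := (@inN R M Omega prodN).
Local Notation MSub := (@MSub R M Omega prodN).
Local Notation restr S x := (patch (fun=> 0) S x).

Lemma restrT S x w : S w -> restr S x w = x w.
Proof. by move=> Sw; rewrite patchT ?inE. Qed.

Lemma restrC S x w : ~ S w -> restr S x w = 0.
Proof. by move=> NSw; rewrite patchC ?inE. Qed.

Lemma inN_fadd x y : inN x -> inN y -> inN (fadd x y).
Proof.
rewrite /inN; case: prodN => // x_fin y_fin.
apply: (@sub_finite_set _ _ ([set w | x w != 0] `|` [set w | y w != 0])).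
  by move=> w /=; rewrite /fadd; have [->|] := eqVneq (x w) 0; [rewrite add0r; right|left].
by rewrite finite_setU.
Qed.

Lemma inN_fscale a x : inN x -> inN (fscale a x).
Proof.
rewrite /inN; case: prodN => // x_fin; apply: sub_finite_set x_fin => w /=.
by rewrite /fscale; apply: contra_neq => ->; rewrite scaler0.
Qed.

Lemma MSub_restr S x : inN x -> MSub S (restr S x).
Proof.
move=> Nx; split=> [|w /restrC//]; move: Nx; rewrite /inN; case: prodN => // x_fin.
apply: sub_finite_set x_fin => w /=; have [Sw|NSw] := pselect (S w).
  by rewrite restrT.
by rewrite restrC ?eqxx.
Qed.

Lemma restr_MSub S x : MSub S x -> restr S x = x.
Proof.
move=> [_ x0]; apply: funext => w; have [Sw|NSw] := pselect (S w).
  by rewrite restrT.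
by rewrite restrC ?x0.
Qed.

Lemma restr_MSub_disjoint S S' x : MSub S' x -> (forall w, S w -> ~ S' w) ->
  restr S x = (fun _ => 0).
Proof.
move=> [_ x0] SS'; apply: funext => w; have [Sw|NSw] := pselect (S w).
  by rewrite restrT ?x0 //; apply: SS'.
by rewrite restrC.
Qed.

Lemma restr_fadd S x y : restr S (fadd x y) = fadd (restr S x) (restr S y).
Proof.
apply: funext => w; rewrite /fadd; have [Sw|NSw] := pselect (S w).
  by rewrite !restrT.
by rewrite !restrC ?addr0.
Qed.

Lemma restr_fscale S a x : restr S (fscale a x) = fscale a (restr S x).
Proof.
apply: funext => w; rewrite /fscale; have [Sw|NSw] := pselect (S w).
  by rewrite !restrT.
by rewrite !restrC ?scaler0.
Qed.

Lemma MSub0 S : MSub S (fun _ => 0).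
Proof.
split=> //; rewrite /inN; case: prodN => //.
by apply: sub_finite_set (finite_set0 Omega) => w /=; rewrite eqxx.
Qed.

Lemma endo_on0 S g : is_endo_on (MSub S) g -> g (fun _ => 0) = (fun _ => 0).
Proof.
move=> [_ g_add _]; have := g_add _ _ (MSub0 S) (MSub0 S).
have -> : fadd (fun _ : Omega => 0 : M) (fun _ => 0) = (fun _ => 0).
  by apply: funext => w; rewrite /fadd addr0.
move=> g00; apply: funext => w; apply: (@addrI _ (g (fun _ => 0) w)).
by rewrite addr0 [in RHS]g00.
Qed.

Section gluing.
Variables (I : Type) (S : I -> set Omega) (g : I -> (Omega -> M) -> (Omega -> M)).
Hypothesis g_endo : forall i, is_endo_on (MSub (S i)) (g i).
Variable piece : Omega -> option I.
Hypothesis pieceP : forall w i, piece w = Some i <-> S i w.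

Definition glued x w := if piece w is Some i then g i (restr (S i) x) w else 0.

Lemma glued_inN x : inN x -> inN (glued x).
Proof.
rewrite /inN; case E: prodN => // x_fin.
pose K w := if piece w is Some i then [set w' | g i (restr (S i) x) w' != 0] else set0.
apply: (@sub_finite_set _ _ (\bigcup_(w in [set w | x w != 0]) K w)).
  move=> w' /=; rewrite /glued; case Ew': (piece w') => [i|]; last by rewrite eqxx.
  have [[w [Siw xw]]|Nx] := pselect (exists w, S i w /\ x w != 0).
    by exists w => //; rewrite /K (proj2 (pieceP _ _) Siw).
  rewrite (restr_MSub_disjoint (S' := ~` S i)); first by rewrite (endo_on0 (g_endo i)) eqxx.
    split=> [|w /contrapT Siw]; first by rewrite /inN E.
    by apply: contrapT => xw; apply: Nx; exists w; split=> //; apply/eqP.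
  by move=> w Siw [].
apply: (bigcup_finite x_fin) => w _; rewrite /K; case: (piece w) => [i|]; last first.
  exact: finite_set0.
have [gS _ _] := g_endo i; have Nx : inN x by rewrite /inN E.
by have [+ _] := gS _ (MSub_restr (S i) Nx); rewrite /inN E.
Qed.

Lemma glued_fadd x y : inN x -> inN y -> glued (fadd x y) = fadd (glued x) (glued y).
Proof.
move=> Nx Ny; apply: funext => w; rewrite /glued [in RHS]/fadd.
case: (piece w) => [i|]; last by rewrite addr0.
have [_ g_add _] := g_endo i.
by rewrite restr_fadd g_add //; apply: MSub_restr.
Qed.

Lemma glued_fscale a x : inN x -> glued (fscale a x) = fscale a (glued x).
Proof.
move=> Nx; apply: funext => w; rewrite /glued [in RHS]/fscale.
case: (piece w) => [i|]; last by rewrite scaler0.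
have [_ _ g_scale] := g_endo i.
by rewrite restr_fscale g_scale //; apply: MSub_restr.
Qed.

Lemma glued_piece i x : MSub (S i) x -> glued x = g i x.
Proof.
move=> Mx; apply: funext => w; rewrite /glued.
have [Siw|NSiw] := pselect (S i w); first by rewrite (proj2 (pieceP _ _) Siw) restr_MSub.
have [gS _ _] := g_endo i; rewrite (proj2 (gS _ Mx)) //.
case Ew: (piece w) => [j|//]; have Sjw := (pieceP _ _).1 Ew.
rewrite (restr_MSub_disjoint Mx) ?(endo_on0 (g_endo j)) // => w' Sjw' Siw'.
have := (pieceP w' j).2 Sjw'; rewrite (proj2 (pieceP w' i) Siw') => -[ij].
by apply: NSiw; rewrite ij.
Qed.

Lemma glued_MSubC i x : MSub (~` S i) x -> MSub (~` S i) (glued x).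
Proof.
move=> Mx; split=> [|w /contrapT Siw]; first by apply: glued_inN; case: Mx.
rewrite /glued (proj2 (pieceP _ _) Siw) (restr_MSub_disjoint Mx) ?(endo_on0 (g_endo i)) //.
by move=> w' Siw' [].
Qed.

End gluing.

Lemma glue_endomorphisms (I : Type) (S : I -> set Omega)
    (g : I -> (Omega -> M) -> (Omega -> M)) :
  trivIset setT S -> (forall i, is_endo_on (MSub (S i)) (g i)) ->
  exists2 F, EndN prodN F & forall i,
    [/\ (forall x, MSub (S i) x -> MSub (S i) (F x)),
        (forall x, MSub (~` S i) x -> MSub (~` S i) (F x)) &
        (forall x, MSub (S i) x -> F x = g i x)].
Proof.
move=> S_triv g_endo.
have /choice[piece pieceP] : forall w, exists o : option I, forall i, o = Some i <-> S i w.
  move=> w; have [[i Siw]|NS] := pselect (exists i, S i w); last first.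
    by exists None => i; split=> // Siw; case: NS; exists i.
  exists (Some i) => j; split=> [[<-] //|Sjw].
  by congr Some; apply: S_triv => //; exists w.
pose F x := if `[< inN x >] then glued S g piece x else (fun _ => 0).
have FE x : inN x -> F x = glued S g piece x by move=> Nx; rewrite /F asboolT.
exists F => [|i].
  split; last by move=> x Nx; rewrite /F asboolF.
  split=> [x Nx|x y Nx Ny|a x Nx].
  - by rewrite FE //; apply: glued_inN.
  - by rewrite !FE ?glued_fadd //; apply: inN_fadd.
  - by rewrite !FE ?glued_fscale //; apply: inN_fscale.
split=> x Mx; rewrite FE; try by case: Mx.
- by rewrite (glued_piece g_endo pieceP Mx); have [gS _ _] := g_endo i; apply: gS.
- exact: glued_MSubC.
- exact: glued_piece.
Qed.

End coordinate_submodules.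

Theorem lemma2 (R : pzRingType) (M : lmodType R) (Omega : Type) (prodN : bool)
  (I : Type) (U : I -> set ((Omega -> M) -> (Omega -> M))) :
  (exists m : M, m != 0) ->
  infinite_set [set: Omega] ->
  ([set: I] #<= [set: Omega])%card ->
  (forall i, U i `<=` @EndN R M Omega prodN) ->
  \bigcup_i U i = @EndN R M Omega prodN ->
  exists i (Sigma : set Omega), moiety Sigma /\ full prodN (U i) Sigma.
Proof.
move=> _ Oinf IO _ U_cover.
have [S S_moiety S_triv] := moiety_family Oinf IO.
apply: contrapT => Nfull.
have /choice[g g_bad] : forall i, exists g, is_endo_on (MSub prodN (S i)) g /\
    ~ exists2 f, stab prodN (U i) (S i) f & forall x, MSub prodN (S i) x -> f x = g x.
  move=> i; apply: contrapT => Ng; apply: Nfull; exists i, (S i); split=> // h h_endo.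
  by apply: contrapT => Nh; apply: Ng; exists h.
have [F F_endo F_glue] := glue_endomorphisms S_triv (fun i => (g_bad i).1).
have [i _ UiF] : (\bigcup_i U i) F by rewrite U_cover.
have [FS FSC Fg] := F_glue i.
by apply: (g_bad i).2; exists F.
Qed.
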